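(* Let $n, s, t$ be positive integers. Let $S_1,\dots, S_s \subseteq \{1,\dots,n\}$ be non-empty pairwise disjoint sets and $T_1,\dots, T_t \subseteq \{1,\dots,n\}$ be non-empty pairwise disjoint sets such that: 1. $\bigcup_{p=1}^s S_p = \bigcup_{q=1}^t T_q=\{1,\dots,n\}$. 2. For any subsets $\theta_1 \subseteq \{1,\dots,s\}$ and $\theta_2 \subseteq \{1,\dots,t\}$, if $\bigcup_{p \in\theta_1} S_p = \bigcup_{q \in\theta_2} T_q=\Gamma$ for some $\Gamma \subseteq \{1,\dots,n\}$, then $\Gamma \in \{\emptyset, \{1,\dots,n\}\}$. Then there exist an integer $l\geq 2$ and a finite sequence of sets $L_1,\dots, L_l \in \{S_1,\dots, S_s\} \cup \{T_1, \dots, T_t\}$ such that $\bigcup_{p=1}^l L_p = \{1,\dots,n\}$, and for all $p \in \{1,\dots,l-1\}$, $(L_1 \cup \dots \cup L_p) \cap L_{p+1} \neq \emptyset$. *)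

From mathcomp Require Import all_boot.
Set Implicit Arguments. Unset Strict Implicit. Unset Printing Implicit Defensive.

From mathcomp Require Import all_boot.

(* Grow a sequence of blocks greedily, starting from an S-block and a T-block
   that meet, by appending any block that meets the current union without being
   contained in it.  When this stops, the union A is a nonempty set that is a
   union of S-blocks and also a union of T-blocks (both families cover the
   ground set, and every block meeting A lies in A), so A is everything. *)

Section LinkedSequences.

Set Implicit Arguments.
Unset Strict Implicit.

Variable T : finType.

Definition linked_seq (L : seq {set T}) :=
  forall p, 1 <= p < size L -> (\bigcup_(X <- take p L) X) :&: nth set0 L p != set0.

Definition saturated (F : {set {set T}}) (A : {set T}) :=
  forall B, B \in F -> B :&: A != set0 -> B \subset A.

Lemma bigcup_rcons (L : seq {set T}) B :
  \bigcup_(X <- rcons L B) X = (\bigcup_(X <- L) X) :|: B.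
Proof. by rewrite big_rcons. Qed.

Lemma linked_seq_rcons L B :
  linked_seq L -> B :&: \bigcup_(X <- L) X != set0 -> linked_seq (rcons L B).
Proof.
move=> linkedL meetB p /andP[p_gt0]; rewrite size_rcons ltnS leq_eqVlt.
case/orP=> [/eqP-> | ltpL].
  by rewrite nth_rcons ltnn eqxx -cats1 take_size_cat // setIC.
by rewrite nth_rcons ltpL -cats1 takel_cat 1?ltnW // linkedL ?p_gt0.
Qed.

Lemma linked_seq_saturate (F : {set {set T}}) L :
  linked_seq L -> {subset L <= F} ->
  exists L', [/\ linked_seq L', {subset L' <= F}, size L <= size L',
                 \bigcup_(X <- L) X \subset \bigcup_(X <- L') X
               & saturated F (\bigcup_(X <- L') X)].
Proof.
have [k] := ubnP #|~: \bigcup_(X <- L) X|; elim: k L => // k IH L ltUk linkedL LF.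
case: (boolP [exists B in F, (B :&: \bigcup_(X <- L) X != set0)
                             && ~~ (B \subset \bigcup_(X <- L) X)]); last first.
  move/exists_inPn=> satL; exists L; split=> // B BF meetB.
  by move: (satL B BF); rewrite meetB negbK.
case/exists_inP=> B BF /andP[meetB /subsetPn[x xB xnotU]].
have shrinks : #|~: \bigcup_(X <- rcons L B) X| < k.
  rewrite -ltnS; apply: leq_trans ltUk; apply: proper_card.
  rewrite bigcup_rcons setCU.
  apply/properP; split; first exact: subsetIl.
  by exists x; rewrite !inE ?xB ?andbF.
have rconsF : {subset rcons L B <= F}.
  by move=> X; rewrite mem_rcons inE => /orP[/eqP-> | /LF].
have [L' [linkedL' L'F sizeL' subL' satL']] :=
  IH _ shrinks (linked_seq_rcons linkedL meetB) rconsF.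
exists L'; split=> //; first by apply: leq_trans sizeL'; rewrite size_rcons.
by apply: subset_trans subL'; rewrite bigcup_rcons subsetUl.
Qed.

Lemma bigcup_saturated (I : finType) (S : I -> {set T}) (A : {set T}) :
  \bigcup_i S i = [set: T] -> (forall i, S i :&: A != set0 -> S i \subset A) ->
  \bigcup_(i in [set i | S i \subset A]) S i = A.
Proof.
move=> coverS satA; apply/eqP; rewrite eqEsubset; apply/andP; split.
  by apply/bigcupsP=> i; rewrite inE.
apply/subsetP=> x xA; have /bigcupP[i _ xSi] : x \in \bigcup_i S i by rewrite coverS.
apply/bigcupP; exists i => //; rewrite inE; apply: satA.
by apply/set0Pn; exists x; rewrite inE xSi.
Qed.

End LinkedSequences.

Theorem lemma1 (n s t : nat) (S : 'I_s -> {set 'I_n}) (T : 'I_t -> {set 'I_n}) :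
  0 < n -> 0 < s -> 0 < t ->
  (forall p, S p != set0) ->
  (forall q, T q != set0) ->
  (forall p1 p2, p1 != p2 -> [disjoint S p1 & S p2]) ->
  (forall q1 q2, q1 != q2 -> [disjoint T q1 & T q2]) ->
  \bigcup_(p < s) S p = [set: 'I_n] ->
  \bigcup_(q < t) T q = [set: 'I_n] ->
  (forall (th1 : {set 'I_s}) (th2 : {set 'I_t}) (G : {set 'I_n}),
      \bigcup_(p in th1) S p = G -> \bigcup_(q in th2) T q = G ->
      G = set0 \/ G = [set: 'I_n]) ->
  exists L : seq {set 'I_n},
    [/\ 2 <= size L,
        (forall X, X \in L -> (exists p, X = S p) \/ (exists q, X = T q)),
        \bigcup_(X <- L) X = [set: 'I_n]
      & forall p, 1 <= p < size L ->
          (\bigcup_(X <- take p L) X) :&: nth set0 L p != set0].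
Proof.
move=> _ s_gt0 _ S_neq0 _ _ _ coverS coverT trivial_common.
pose p0 := Ordinal s_gt0.
pose F := S @: setT :|: T @: setT.
have [x xS] := set0Pn _ (S_neq0 p0).
have /bigcupP[q _ xT] : x \in \bigcup_(q < t) T q by rewrite coverT.
have linked0 : linked_seq [:: S p0; T q].
  case=> [|[|//]] //= _; rewrite big_seq1 setIC.
  by apply/set0Pn; exists x; rewrite inE xS xT.
have sub0 : {subset [:: S p0; T q] <= F}.
  by move=> X; rewrite !inE => /orP[]/eqP->; rewrite imset_f ?orbT.
have [L [linkedL LF sizeL subL satL]] := linked_seq_saturate linked0 sub0.
have UL_neq0 : \bigcup_(X <- L) X != set0.
  apply/set0Pn; exists x; apply: (subsetP subL).
  by rewrite big_cons inE xS.
exists L; split=> //.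
- by move=> X /LF; rewrite inE => /orP[]/imsetP[i _ ->]; [left | right]; exists i.
have S_sat p : S p :&: \bigcup_(X <- L) X != set0 -> S p \subset \bigcup_(X <- L) X.
  by apply: satL; rewrite !inE imset_f.
have T_sat q' : T q' :&: \bigcup_(X <- L) X != set0 -> T q' \subset \bigcup_(X <- L) X.
  by apply: satL; rewrite !inE imset_f ?orbT.
have [UL0 | //] := trivial_common _ _ _
  (bigcup_saturated coverS S_sat) (bigcup_saturated coverT T_sat).
by rewrite UL0 eqxx in UL_neq0.
Qed.
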